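(* As an identity of formal power series in $q$ with integer coefficients, $$\sum_{n=0}^\infty\big[(q)_\infty-(q)_n\big] =(q)_\infty\sum_{k=1}^\infty\frac{q^k}{1-q^k} +\sum_{r=1}^\infty(-1)^r\Big[(3r-1)q^{r(3r-1)/2}+3r\,q^{r(3r+1)/2}\Big].$$
   Context: For $n$ a nonnegative integer or $n=\infty$, $(a)_n=\prod_{k=1}^n(1-aq^{k-1})$; in particular $(q)_n=\prod_{k=1}^n(1-q^k)$ and $(q)_0=1$. All series are formal power series in $q$ (the sum on the left converges $q$-adically since $(q)_\infty-(q)_n$ is divisible by $q^{n+1}$). *)

From mathcomp Require Import all_boot all_order all_algebra.
Set Implicit Arguments. Unset Strict Implicit. Unset Printing Implicit Defensive.
Import Order.TTheory GRing.Theory Num.Theory.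
Local Open Scope ring_scope.

(* formal power series in q with integer coefficients: N |-> coefficient of q^N *)
Definition fps := nat -> int.

Definition fps_of_poly (p : {poly int}) : fps := fun N => p`_N.
Definition fps_add (f g : fps) : fps := fun N => f N + g N.
Definition fps_mul (f g : fps) : fps :=
  fun N => \sum_(i < N.+1) f i * g (N - i)%N.
Definition qmono (c : int) (e : nat) : fps := fun N => if N == e then c else 0.

Definition is_qlim (a : nat -> fps) (s : fps) : Prop :=
  forall N : nat, exists M : nat, forall m : nat, (M <= m)%N -> a m N = s N.
Definition is_qsum (a : nat -> fps) (s : fps) : Prop :=
  is_qlim (fun M N => \sum_(n < M) a n N) s.

Definition qpoch (n : nat) : {poly int} := \prod_(k < n) (1 - 'X^(k.+1)).

(* q^k/(1-q^k) = sum_{m>=1} q^{k m}, expanded as a formal power series (k >= 1) *)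
Definition geomk (k : nat) : fps :=
  fun N => if [&& (0 < k)%N, (k <= N)%N & (k %| N)%N] then 1 else 0.

(* With F(u) := (1 - u) sum_n (uq; q)_n u^n (Fine's function), the identity
   F(u) = 1 - u^2 q - u^3 q^2 F(uq), exact up to a tail of order u^N for the
   partial sums, iterates at u = z q^j to the Rogers-Fine expansion
   F(z) = sum_k (-1)^k z^(3k) q^(k(3k+1)/2) (1 - z^2 q^(2k+1)), modulo q^(jN).
   Differentiate in z at z = 1: on the left, (1 - z) kills everything except
   -sum_n (q)_n and the derivative of the tail z^(M+1) (zq; q)_M, namely
   (M+1) (q)_M - (q)_M sum_k q^k/(1 - q^k) modulo q^(M+1); on the right one
   gets the pentagonal series.  Comparing coefficients of q^N for M >= N gives
   the identity. *)

From mathcomp Require Import all_boot all_order all_algebra.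
From mathcomp Require Import ring zify.
From Stdlib Require Import FunctionalExtensionality.
Import Order.TTheory GRing.Theory Num.Theory.
Set Implicit Arguments. Unset Strict Implicit. Unset Printing Implicit Defensive.
Local Open Scope ring_scope.

Section FineFunction.
Variable A : comNzRingType.
Implicit Types u x : A.

Definition poch u x n := \prod_(i < n) (1 - u * x ^+ i.+1).
Definition fine u x N := (1 - u) * \sum_(n < N) poch u x n * u ^+ n.

Lemma poch0 u x : poch u x 0 = 1. Proof. by rewrite /poch big_ord0. Qed.

Lemma pochS u x n : poch u x n.+1 = poch u x n * (1 - u * x ^+ n.+1).
Proof. by rewrite /poch big_ord_recr. Qed.

Lemma pochSl u x n : poch u x n.+1 = (1 - u * x) * poch (u * x) x n.
Proof.
rewrite /poch big_ord_recl expr1; congr (_ * _); apply: eq_bigr => i _.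
by rewrite /bump /= exprS mulrA [u * x]mulrC.
Qed.

Lemma fine_telescope u x N :
  fine u x N.+1 = 1 - u ^+ N.+1 * poch u x N
                    - u ^+ 2 * x * \sum_(n < N) poch u x n * (u * x) ^+ n.
Proof.
elim: N => [|N IH]; first by rewrite /fine !big_ord1 big_ord0 poch0; ring.
rewrite /fine big_ord_recr mulrDr -/(fine u x N.+1) IH big_ord_recr /= pochS.
rewrite !exprS exprMn; ring.
Qed.

Lemma sum_poch_shift u x N :
  \sum_(n < N.+1) poch u x n * (u * x) ^+ n = 1 + u * x * fine (u * x) x N.
Proof.
rewrite big_ord_recl poch0 expr0 mul1r /fine mulrA big_distrr; congr (_ + _).
by apply: eq_bigr => i _; rewrite /bump /= pochSl exprS; ring.
Qed.

Lemma fine_rec u x N :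
  fine u x N.+2 = 1 - u ^+ 2 * x - u ^+ N.+2 * poch u x N.+1
                    - u ^+ 3 * x ^+ 2 * fine (u * x) x N.
Proof. by rewrite fine_telescope sum_poch_shift !exprS; ring. Qed.

End FineFunction.

Section DivisibilityByXn.
Variable R : nzRingType.
Implicit Types p r : {poly R}.

Definition dvdXn m p := forall i, (i < m)%N -> p`_i = 0.

Lemma dvdXn0 m : dvdXn m 0. Proof. by move=> i _; rewrite coef0. Qed.

Lemma dvdXnW n m p : (n <= m)%N -> dvdXn m p -> dvdXn n p.
Proof. by move=> nm hp i hi; apply: hp; apply: leq_trans nm. Qed.

Lemma dvdXnD m p r : dvdXn m p -> dvdXn m r -> dvdXn m (p + r).
Proof. by move=> hp hr i hi; rewrite coefD hp // hr // addr0. Qed.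

Lemma dvdXnN m p : dvdXn m p -> dvdXn m (- p).
Proof. by move=> hp i hi; rewrite coefN hp // oppr0. Qed.

Lemma dvdXnB m p r : dvdXn m p -> dvdXn m r -> dvdXn m (p - r).
Proof. by move=> hp hr; apply: dvdXnD => //; apply: dvdXnN. Qed.

Lemma dvdXnMn m p k : dvdXn m p -> dvdXn m (p *+ k).
Proof. by move=> hp i hi; rewrite coefMn hp // mul0rn. Qed.

Lemma dvdXnMl m p r : dvdXn m p -> dvdXn m (r * p).
Proof.
move=> hp i hi; rewrite coefM; apply: big1 => k _.
rewrite hp ?mulr0 //; exact: leq_ltn_trans (leq_subr _ _) hi.
Qed.

Lemma dvdXnMr m p r : dvdXn m p -> dvdXn m (p * r).
Proof.
move=> hp i hi; rewrite coefM; apply: big1 => k _.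
by rewrite hp ?mul0r // (leq_trans (ltn_ord k) hi).
Qed.

Lemma dvdXn_Xn m : dvdXn m 'X^m.
Proof. by move=> i hi; rewrite coefXn ltn_eqF. Qed.

Lemma dvdXn_XnM a b p : dvdXn b p -> dvdXn (a + b) ('X^a * p).
Proof.
move=> hp i hi; rewrite coefXnM; case: ltnP => // h.
by apply: hp; rewrite ltn_subLR.
Qed.

Lemma dvdXn_shift j m p :
  dvdXn (j.+1 * m) p -> dvdXn (j * m.+2) ('X^(j * 3) * 'X^2 * p).
Proof.
move=> hp; rewrite -exprD; apply: (@dvdXnW _ (j * 3 + 2 + j.+1 * m)); first nia.
exact: dvdXn_XnM.
Qed.

End DivisibilityByXn.

Lemma sumr_ord_trunc (V : nmodType) (a : nat -> V) b m :
  (b <= m)%N -> (forall n, (b <= n)%N -> a n = 0) ->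
  \sum_(n < m) a n = \sum_(n < b) a n.
Proof.
move=> le_bm a_eq0; rewrite -(subnKC le_bm) big_split_ord -[RHS]addr0 /=.
by congr (_ + _); apply: big1 => n _; apply: a_eq0; rewrite leq_addr.
Qed.

Lemma is_qsum_bounded (a : nat -> fps) (b : nat -> nat) :
  (forall N n, (b N <= n)%N -> a n N = 0) ->
  is_qsum a (fun N => \sum_(n < b N) a n N).
Proof.
move=> a_eq0 N; exists (b N) => m le_bm.
by apply: (@sumr_ord_trunc _ (a^~ N)) => // n; apply: a_eq0.
Qed.

Section ValueAndDerivativeAtOne.
Variable R : comNzRingType.
Implicit Types (p r : {poly R}) (c : R).

Definition evz p := p.[1].
Definition derz p := p^`().[1].

Lemma evzM p r : evz (p * r) = evz p * evz r. Proof. exact: hornerM. Qed.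
Lemma evzB p r : evz (p - r) = evz p - evz r.
Proof. by rewrite /evz hornerD hornerN. Qed.
Lemma evzC c : evz c%:P = c. Proof. exact: hornerC. Qed.
Lemma evz1 : evz 1 = 1. Proof. exact: hornerC. Qed.

Lemma derzM p r : derz (p * r) = derz p * evz r + evz p * derz r.
Proof. by rewrite /derz /evz derivM hornerD !hornerM. Qed.
Lemma derzB p r : derz (p - r) = derz p - derz r.
Proof. by rewrite /derz derivB hornerD hornerN. Qed.
Lemma derzC c : derz c%:P = 0. Proof. by rewrite /derz derivC horner0. Qed.
Lemma derz1 : derz 1 = 0. Proof. exact: derzC. Qed.

Lemma evz_zCX c k : evz (('X * c%:P) ^+ k) = c ^+ k.
Proof. by rewrite exprMn -polyC_exp evzM /evz hornerXn expr1n hornerC mul1r. Qed.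

Lemma derz_zCX c k : derz (('X * c%:P) ^+ k) = c ^+ k *+ k.
Proof.
rewrite exprMn -polyC_exp derzM derzC mulr0 addr0 /derz /evz.
by rewrite derivXn hornerMn hornerXn expr1n hornerC mulr_natl.
Qed.

End ValueAndDerivativeAtOne.

(* The outer variable of {poly {poly int}} is z, the inner one q. *)
Definition zq j : {poly {poly int}} := 'X * ('X^j)%:P.
Definition qC : {poly {poly int}} := ('X)%:P.

Lemma zqS j : zq j * qC = zq j.+1.
Proof. by rewrite /zq /qC -mulrA -polyCM -exprSr. Qed.

Lemma evz_zqX j k : evz (zq j ^+ k) = 'X^(j * k).
Proof. by rewrite evz_zCX -exprM. Qed.

Lemma derz_zqX j k : derz (zq j ^+ k) = 'X^(j * k) *+ k.
Proof. by rewrite derz_zCX -exprM. Qed.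

Lemma qCX k : qC ^+ k = ('X^k)%:P.
Proof. by rewrite /qC polyC_exp. Qed.

Definition fine_val m j := evz (fine (zq j) qC m).
Definition fine_der m j := derz (fine (zq j) qC m).

Lemma fine_val_rec m j : fine_val m.+2 j = 1 - 'X^(j * 2) * 'X
   - evz (zq j ^+ m.+2 * poch (zq j) qC m.+1) - 'X^(j * 3) * 'X^2 * fine_val m j.+1.
Proof.
rewrite /fine_val fine_rec zqS !evzB evz1 [evz (zq j ^+ 2 * _)]evzM.
by rewrite [evz (zq j ^+ 3 * _ * _)]evzM [evz (zq j ^+ 3 * _)]evzM !evz_zqX qCX !evzC.
Qed.

Lemma fine_der_rec m j : fine_der m.+2 j = - ('X^(j * 2) * 'X) *+ 2
   - derz (zq j ^+ m.+2 * poch (zq j) qC m.+1)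
   - ('X^(j * 3) * 'X^2) *+ 3 * fine_val m j.+1 - 'X^(j * 3) * 'X^2 * fine_der m j.+1.
Proof.
rewrite /fine_der /fine_val fine_rec zqS !derzB derz1 [derz (zq j ^+ 2 * _)]derzM.
rewrite [derz (zq j ^+ 3 * _ * _)]derzM [derz (zq j ^+ 3 * _)]derzM.
rewrite [evz (zq j ^+ 3 * _)]evzM !evz_zqX !derz_zqX qCX !evzC !derzC.
rewrite !mulr0 !addr0 -!mulrnAl; ring.
Qed.

Lemma dvdXn_zqXM j k p :
  dvdXn (j * k) (evz (zq j ^+ k * p)) /\ dvdXn (j * k) (derz (zq j ^+ k * p)).
Proof.
rewrite evzM derzM evz_zqX derz_zqX; split; first exact/dvdXnMr/dvdXn_Xn.
by apply: dvdXnD; apply/dvdXnMr; [apply/dvdXnMn|]; apply: dvdXn_Xn.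
Qed.

Fixpoint pent k := if k is k'.+1 then (pent k' + 3 * k' + 2)%N else 0%N.

Lemma pentE k : (2 * pent k = k * (3 * k + 1))%N.
Proof. by elim: k => [|k IH] //=; nia. Qed.

Lemma leq_pent k : (k <= pent k)%N.
Proof. by elim: k => [|k IH] //=; lia. Qed.

Definition pexp j k := (3 * j * k + pent k)%N.

(* The first K terms of the Rogers-Fine expansion of F(z q^j), evaluated and
   differentiated in z at z = 1. *)
Definition penta_val K j : {poly int} := \sum_(k < K) (-1) ^+ k *
   ('X^(pexp j k) - 'X^(pexp j k + 2 * (j + k) + 1)).
Definition penta_der K j : {poly int} := \sum_(k < K) (-1) ^+ k *
   ('X^(pexp j k) *+ (3 * k) - 'X^(pexp j k + 2 * (j + k) + 1) *+ (3 * k + 2)).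

Lemma pexp0 j : pexp j 0 = 0%N. Proof. by rewrite /pexp muln0. Qed.

Lemma pexpS j k : pexp j k.+1 = (j * 3 + 2 + pexp j.+1 k)%N.
Proof. by rewrite /pexp /=; nia. Qed.

Lemma pexpS_shift j k : (pexp j k.+1 + 2 * (j + k.+1) + 1 =
  j * 3 + 2 + (pexp j.+1 k + 2 * (j.+1 + k) + 1))%N.
Proof. by rewrite pexpS; lia. Qed.

Lemma penta_val_rec K j :
  penta_val K.+1 j = 1 - 'X^(j * 2) * 'X - 'X^(j * 3) * 'X^2 * penta_val K j.+1.
Proof.
rewrite /penta_val big_ord_recl big_distrr /= pexp0 add0n addn0 addn1 -mulnC -exprSr.
rewrite !expr0 mul1r -!addrA -sumrN; do 2 congr (_ + _); apply: eq_bigr => k _.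
rewrite /bump leq0n add1n pexpS_shift pexpS.
move: (pexp j.+1 k) (2 * (j.+1 + k))%N => e d.
by rewrite !exprD exprS; ring.
Qed.

Lemma penta_der_rec K j : penta_der K.+1 j = - ('X^(j * 2) * 'X) *+ 2
   - ('X^(j * 3) * 'X^2) *+ 3 * penta_val K j.+1 - 'X^(j * 3) * 'X^2 * penta_der K j.+1.
Proof.
rewrite /penta_der /penta_val big_ord_recl !big_distrr /= -addrA; congr (_ + _).
  rewrite pexp0 muln0 add0n addn0 addn1 [(2 * j)%N]mulnC -exprSr.
  by rewrite expr0 mul1r mulr0n sub0r mulNrn.
rewrite -sumrN -sumrB; apply: eq_bigr => k _.
rewrite /bump leq0n add1n pexpS_shift pexpS [(3 * k.+1)%N]mulnSr.
move: (pexp j.+1 k) (2 * (j.+1 + k))%N (3 * k)%N => e d m.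
by rewrite !exprD exprS; ring.
Qed.

Lemma fine_penta_cong N j :
  dvdXn (j * (2 * N)) (fine_val (2 * N) j - penta_val N j) /\
  dvdXn (j * (2 * N)) (fine_der (2 * N) j - penta_der N j).
Proof.
elim: N j => [|N IH] j; first by rewrite !muln0; split => i.
rewrite (_ : (2 * N.+1 = (2 * N).+2)%N); last lia.
have [ev_err der_err] := IH j.+1.
have [ev_tail der_tail] := dvdXn_zqXM j (2 * N).+2 (poch (zq j) qC (2 * N).+1).
set B := evz _ in ev_tail; set B' := derz _ in der_tail.
set E := fine_val _ j.+1 in ev_err *; set F := fine_der _ j.+1 in der_err *.
split.
  have -> : fine_val (2 * N).+2 j - penta_val N.+1 j =
            - B - 'X^(j * 3) * 'X^2 * (E - penta_val N j.+1).
    by rewrite fine_val_rec penta_val_rec -/B -/E; ring.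
  by apply: dvdXnB; [apply: dvdXnN | apply: dvdXn_shift].
have -> : fine_der (2 * N).+2 j - penta_der N.+1 j =
    - B' - 'X^(j * 3) * 'X^2 * ((E - penta_val N j.+1) *+ 3 + (F - penta_der N j.+1)).
  by rewrite fine_der_rec penta_der_rec -/B' -/E -/F -!mulrnAl; ring.
apply: dvdXnB; first exact: dvdXnN.
by apply/dvdXn_shift/dvdXnD => //; apply: dvdXnMn.
Qed.

Lemma evz_poch_z n : evz (poch (zq 0) qC n) = qpoch n.
Proof.
elim: n => [|n IH]; first by rewrite poch0 evz1 /qpoch big_ord0.
rewrite pochS evzM IH evzB evz1 -[zq 0]expr1 evzM evz_zqX qCX evzC.
by rewrite mul0n expr0 mul1r /qpoch big_ord_recr.
Qed.

Definition dpoch n := derz (poch (zq 0) qC n).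

Lemma dpochS n : dpoch n.+1 = dpoch n * (1 - 'X^(n.+1)) - qpoch n * 'X^(n.+1).
Proof.
rewrite /dpoch pochS derzM -/(dpoch n) evz_poch_z derzB derz1 -[zq 0]expr1.
rewrite derzM evzB evz1 evzM evz_zqX derz_zqX qCX evzC derzC.
by rewrite mul0n expr0 mulr0 addr0 !mul1r sub0r mulrN.
Qed.

Lemma fine_der0 m : fine_der m 0 = - \sum_(n < m) qpoch n.
Proof.
have zq_val : evz (zq 0) = 1 by rewrite -[zq 0]expr1 evz_zqX.
have zq_der : derz (zq 0) = 1 by rewrite -[zq 0]expr1 derz_zqX.
rewrite /fine_der /fine derzM derzB derz1 zq_der evzB evz1 zq_val subrr mul0r addr0.
rewrite /evz horner_sum sub0r mulN1r; congr (- _); apply: eq_bigr => n _.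
by rewrite hornerM -/(evz _) evz_poch_z -/(evz _) evz_zqX expr0 mulr1.
Qed.

Lemma derz_zX_poch k n : derz (zq 0 ^+ k * poch (zq 0) qC n) = qpoch n *+ k + dpoch n.
Proof. by rewrite derzM derz_zqX evz_zqX evz_poch_z expr0 mul1r mulr_natl. Qed.

Definition geomk_trunc M k : {poly int} := \poly_(i < M.+1) geomk k i.
Definition divisor_trunc M n : {poly int} := \sum_(k < n) geomk_trunc M k.+1.

Lemma geomk_shift k i : (0 < k)%N -> (k < i)%N -> geomk k i = geomk k (i - k)%N.
Proof.
move=> k_gt0 ki; have dvd_sub : (k %| (i - k))%N = (k %| i)%N.
  by rewrite -{2}(subnK (ltnW ki)) dvdn_addl.
rewrite /geomk k_gt0 dvd_sub (ltnW ki) /=.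
have [dvd_ki|] := boolP (k %| i)%N; rewrite ?andbF //.
by rewrite dvdn_leq ?subn_gt0 ?dvd_sub.
Qed.

Lemma geomk_truncP M k :
  (0 < k)%N -> dvdXn M.+1 ((1 - 'X^k) * geomk_trunc M k - 'X^k).
Proof.
move=> k_gt0 i hi; rewrite coefB mulrBl mul1r coefB coefXnM coefXn /geomk_trunc.
rewrite !coef_poly hi.
case: (ltngtP i k) => h.
- by rewrite /geomk k_gt0 leqNgt h subrr.
- by rewrite (leq_ltn_trans (leq_subr _ _) hi) -geomk_shift // subrr.
- by rewrite h subnn /geomk k_gt0 leqnn dvdnn /= leqNgt k_gt0 subr0 subrr.
Qed.

Lemma dvdXn_dpoch M n : dvdXn M.+1 (dpoch n + qpoch n * divisor_trunc M n).
Proof.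
elim: n => [|n IH].
  by rewrite /dpoch poch0 derz1 /divisor_trunc big_ord0 mulr0 addr0; apply: dvdXn0.
have -> : dpoch n.+1 + qpoch n.+1 * divisor_trunc M n.+1 =
   (1 - 'X^(n.+1)) * (dpoch n + qpoch n * divisor_trunc M n) +
   qpoch n * ((1 - 'X^(n.+1)) * geomk_trunc M n.+1 - 'X^(n.+1)).
  by rewrite dpochS /qpoch big_ord_recr /= -/(qpoch n) /divisor_trunc big_ord_recr /=; ring.
by apply: dvdXnD; [apply: dvdXnMl | apply/dvdXnMl/geomk_truncP].
Qed.

Lemma qpoch_sum_cong N (M := (2 * N).+1) :
  dvdXn M.+1 (qpoch M *+ M.+1 - \sum_(n < M.+1) qpoch n - penta_der N.+1 0
              - qpoch M * divisor_trunc M M).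
Proof.
have [ev_err der_err] := fine_penta_cong N 1; rewrite mul1n in ev_err der_err.
have fine_z := fine_der_rec (2 * N) 0; rewrite fine_der0 derz_zX_poch -/M in fine_z.
have fine_err : dvdXn M.+1
    (qpoch M *+ M.+1 + dpoch M - \sum_(n < M.+1) qpoch n - penta_der N.+1 0).
  have -> : qpoch M *+ M.+1 + dpoch M - \sum_(n < M.+1) qpoch n - penta_der N.+1 0 =
      - ('X^2 * ((fine_val (2 * N) 1 - penta_val N 1) *+ 3
                 + (fine_der (2 * N) 1 - penta_der N 1))).
    rewrite -[\sum_(n < M.+1) _]opprK fine_z penta_der_rec !mul0n !expr0 !mul1r.
    by rewrite -!mulrnAl; ring.
  rewrite (_ : M.+1 = 2 + 2 * N)%N; last by rewrite /M; lia.
  by apply/dvdXnN/dvdXn_XnM/dvdXnD => //; apply: dvdXnMn.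
have -> : qpoch M *+ M.+1 - \sum_(n < M.+1) qpoch n - penta_der N.+1 0
            - qpoch M * divisor_trunc M M =
   (qpoch M *+ M.+1 + dpoch M - \sum_(n < M.+1) qpoch n - penta_der N.+1 0)
   - (dpoch M + qpoch M * divisor_trunc M M) by ring.
exact/dvdXnB/dvdXn_dpoch.
Qed.

Lemma qpoch_stable N d : dvdXn N.+1 (qpoch (N + d) - qpoch N).
Proof.
elim: d => [|d IH]; first by rewrite addn0 subrr; apply: dvdXn0.
have -> : qpoch (N + d.+1) - qpoch N =
          qpoch (N + d) - qpoch N - 'X^((N + d).+1) * qpoch (N + d).
  by rewrite addnS /qpoch big_ord_recr /=; ring.
by apply/dvdXnB/dvdXnMr => //; rewrite -addSn exprD; apply/dvdXnMr/dvdXn_Xn.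
Qed.

Definition qpoch_inf : fps := fun N => (qpoch N)`_N.

Lemma qpoch_infE N n : (N <= n)%N -> (qpoch n)`_N = qpoch_inf N.
Proof.
move=> le_Nn; have := @qpoch_stable N (n - N) N (ltnSn N).
by rewrite subnKC // coefB => /eqP; rewrite subr_eq0 => /eqP.
Qed.

Lemma geomk_eq0 k N : (N < k)%N -> geomk k N = 0.
Proof. by move=> lt_Nk; rewrite /geomk [(k <= N)%N]leqNgt lt_Nk andbF. Qed.

Definition pent_term (r : nat) : fps :=
  fps_add (qmono ((-1) ^+ r.+1 * ((3 * r.+1 - 1)%N)%:Z) ((r.+1 * (3 * r.+1 - 1)) %/ 2))
          (qmono ((-1) ^+ r.+1 * ((3 * r.+1)%N)%:Z) ((r.+1 * (3 * r.+1 + 1)) %/ 2)).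

Definition qpoch_tail_sum : fps := fun N => \sum_(n < N.+1) (qpoch_inf N - (qpoch n)`_N).
Definition divisor_series : fps := fun N => \sum_(k < N) geomk k.+1 N.
Definition pent_series : fps := fun N => \sum_(r < N) pent_term r N.

Lemma pent_term_exp1 r : ((r.+1 * (3 * r.+1 - 1)) %/ 2 = pent r + 2 * r + 1)%N.
Proof.
rewrite (_ : r.+1 * (3 * r.+1 - 1) = 2 * (pent r + 2 * r + 1))%N ?mulKn //.
by have := pentE r; nia.
Qed.

Lemma pent_term_exp2 r : ((r.+1 * (3 * r.+1 + 1)) %/ 2 = pent r.+1)%N.
Proof. by rewrite -pentE mulKn. Qed.

Lemma pent_term_eq0 r N : (N <= r)%N -> pent_term r N = 0.
Proof.
move=> le_Nr; have := leq_pent r.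
rewrite /pent_term /fps_add /qmono pent_term_exp1 pent_term_exp2 /= => le_r.
by rewrite !ifN ?addr0 //; apply/eqP; lia.
Qed.

Lemma coef_Msign (R : nzRingType) (p : {poly R}) k i :
  ((-1) ^+ k * p)`_i = (-1) ^+ k * p`_i.
Proof.
rewrite -signr_odd -[(-1) ^+ k : R]signr_odd.
by case: (odd k); rewrite ?expr0 ?expr1 ?mul1r // !mulN1r coefN.
Qed.

Lemma penta_der_coef N : (penta_der N.+1 0)`_N = pent_series N.
Proof.
rewrite /penta_der coef_sum.
under eq_bigr => k _ do
  rewrite coef_Msign coefB !coefMn !coefXn /pexp muln0 mul0n add0n mulrBr.
rewrite sumrB big_ord_recl big_ord_recr /= muln0 mulr0n mulr0 add0r !add0n.
rewrite (_ : (N == pent N + 2 * N + 1)%N = false); last by apply/eqP; lia.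
rewrite /= mulr0n mul0rn mulr0 addr0 /pent_series -sumrB; apply: eq_bigr => r _.
rewrite /pent_term /fps_add /qmono pent_term_exp1 pent_term_exp2 /bump /= add1n addrC.
congr (_ + _); case: (N == _) => /=; rewrite ?mulr0n ?mul0rn ?mulr0 ?oppr0 //.
  rewrite exprS (_ : (3 * r.+1 - 1 = 3 * r + 2)%N); last by lia.
  by rewrite mulN1r mulNr mulr1n natz.
by rewrite mulr1n natz.
Qed.

Lemma qpoch_tail_sumE N :
  qpoch_tail_sum N = fps_add (fps_mul qpoch_inf divisor_series) pent_series N.
Proof.
pose M := (2 * N).+1; have le_NM : (N <= M)%N by rewrite /M; lia.
have tail_eq : qpoch_tail_sum N = (qpoch M)`_N *+ M.+1 - \sum_(n < M.+1) (qpoch n)`_N.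
  rewrite /qpoch_tail_sum.
  rewrite -(@sumr_ord_trunc _ (fun n => qpoch_inf N - (qpoch n)`_N) N.+1 M.+1) //.
    by rewrite sumrB sumr_const card_ord qpoch_infE.
  by move=> n le_Nn; rewrite qpoch_infE ?subrr // ltnW.
have prod_eq : fps_mul qpoch_inf divisor_series N =
               \sum_(i < N.+1) (qpoch M)`_i * (divisor_trunc M M)`_(N - i).
  apply: eq_bigr => i _; have le_iN := ltn_ord i.
  rewrite -(@qpoch_infE i M); last by lia.
  congr (_ * _); rewrite /divisor_trunc coef_sum /divisor_series.
  rewrite -(@sumr_ord_trunc _ (fun k => geomk k.+1 (N - i)%N) (N - i) M); last 2 first.
  - by rewrite /M; lia.
  - by move=> k le_k; rewrite geomk_eq0.
  by apply: eq_bigr => k _; rewrite /geomk_trunc coef_poly ifT //; rewrite /M; lia.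
have := @qpoch_sum_cong N N (leq_ltn_trans le_NM (ltnSn _)).
rewrite -/M !coefB coefMn coef_sum penta_der_coef => /eqP.
rewrite subr_eq0 => /eqP cong.
by rewrite /fps_add tail_eq prod_eq -coefM -cong; ring.
Qed.

Theorem theorem1 :
  exists Pinf L S T : fps,
    is_qlim (fun n => fps_of_poly (qpoch n)) Pinf /\
    is_qsum (fun n N => Pinf N - (qpoch n)`_N) L /\
    is_qsum (fun k => geomk k.+1) S /\
    is_qsum (fun r =>
      fps_add (qmono ((-1) ^+ r.+1 * ((3 * r.+1 - 1)%N)%:Z) ((r.+1 * (3 * r.+1 - 1)) %/ 2))
              (qmono ((-1) ^+ r.+1 * ((3 * r.+1)%N)%:Z) ((r.+1 * (3 * r.+1 + 1)) %/ 2))) T /\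
    L = fps_add (fps_mul Pinf S) T.
Proof.
exists qpoch_inf, qpoch_tail_sum, divisor_series, pent_series.
split; [|split; [|split; [|split]]].
- by move=> N; exists N => n le_Nn; rewrite /fps_of_poly qpoch_infE.
- apply: (@is_qsum_bounded _ succn) => N n lt_Nn.
  by rewrite qpoch_infE ?subrr // ltnW.
- by apply: (@is_qsum_bounded _ id) => N k le_Nk; rewrite geomk_eq0.
- by apply: (@is_qsum_bounded pent_term id) => N r; apply: pent_term_eq0.
- by apply: functional_extensionality => N; apply: qpoch_tail_sumE.
Qed.
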